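(* Let $\Gamma=(V,\nu,\mu)$ be a fuzzy graph on $n\ge2$ vertices. Then $$\sigma^*(\Gamma)\le\frac{2\,\mathrm{ew}(\Gamma)^2}{n}\left(1-\frac2n\right),$$ with equality if and only if $\Gamma$ has exactly one positive fuzzy edge, with membership value $\mathrm{ew}(\Gamma)$, and all other memberships zero; that is, there are distinct vertices $u,v$ with $\mu(u,v)=\mathrm{ew}(\Gamma)$ and $\mu(x,y)=0$ for all other pairs $\{x,y\}\ne\{u,v\}$, so that the degree sequence is $\mathrm{ew}(\Gamma),\mathrm{ew}(\Gamma),0,\dots,0$ (with $n-2$ zeros).
   Context: A fuzzy graph $\Gamma=(V,\nu,\mu)$ consists of a finite vertex set $V$ with $|V|=n$, a map $\nu:V\to[0,1]$, and a symmetric map $\mu:V\times V\to[0,1]$ with $\mu(u,v)\le\min(\nu(u),\nu(v))$. The fuzzy degree is $d_\Gamma(v)=\sum_{u\ne v}\mu(v,u)$, the fuzzy size is $\mathrm{ew}(\Gamma)=\sum_{\{u,v\},u\ne v}\mu(u,v)$, $\lambda=2\,\mathrm{ew}(\Gamma)/n$, and the fuzzy sigma index is $\sigma^*(\Gamma)=\frac1n\sum_{v}(d_\Gamma(v)-\lambda)^2$. *)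

From HB Require Import structures.
From mathcomp Require Import all_boot all_order all_algebra.
Set Implicit Arguments. Unset Strict Implicit. Unset Printing Implicit Defensive.
Import Order.TTheory GRing.Theory Num.Theory.
Local Open Scope ring_scope.

Definition is_fuzzy_graph (R : realFieldType) (n : nat)
  (nu : 'I_n -> R) (mu : 'I_n -> 'I_n -> R) : Prop :=
  [/\ forall v, 0 <= nu v <= 1,
      forall u v, 0 <= mu u v <= 1,
      forall u v, mu u v = mu v u &
      forall u v, mu u v <= Num.min (nu u) (nu v)].

Definition fdeg (R : realFieldType) (n : nat) (mu : 'I_n -> 'I_n -> R) (v : 'I_n) : R :=
  \sum_(u < n | u != v) mu v u.

Definition fsize (R : realFieldType) (n : nat) (mu : 'I_n -> 'I_n -> R) : R :=
  \sum_(u < n) \sum_(v < n | (u < v)%N) mu u v.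

Definition flambda (R : realFieldType) (n : nat) (mu : 'I_n -> 'I_n -> R) : R :=
  2 * fsize mu / n%:R.

Definition fsigma (R : realFieldType) (n : nat) (mu : 'I_n -> 'I_n -> R) : R :=
  (\sum_(v < n) (fdeg mu v - flambda mu) ^+ 2) / n%:R.

From HB Require Import structures.
From mathcomp Require Import all_boot all_order all_algebra.
From mathcomp Require Import ring lra.
Import Order.TTheory GRing.Theory Num.Theory.
Local Open Scope ring_scope.
Set Implicit Arguments. Unset Strict Implicit. Unset Printing Implicit Defensive.

(* Write e = ew and d = fdeg. The handshake identity \sum_v d v = 2 e gives
   n * sigma = \sum_v d v ^ 2 - 4 e ^ 2 / n, and
   \sum_v d v ^ 2 = 2 e ^ 2 - \sum_v d v * (e - d v).  Since e - d v is the
   weight of the fuzzy graph with v deleted, this defect is nonnegative, and it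
   vanishes exactly when each vertex is either isolated or incident to all the
   weight, i.e. when the weight sits on a single edge. *)

Lemma endpoints_cover_edge (T : eqType) (u v x y : T) :
  u != v -> (x == u) || (y == u) -> (x == v) || (y == v) ->
  (x == u) && (y == v) || (x == v) && (y == u).
Proof.
move=> uv /orP[]/eqP-> /orP[]/eqP E; rewrite ?E ?eqxx ?andbT ?orbT //.
all: by move: uv; rewrite E eqxx.
Qed.

Section FuzzyDegrees.

Variables (R : realFieldType) (n : nat) (mu : 'I_n -> 'I_n -> R).
Hypothesis mu_sym : forall u v, mu u v = mu v u.

Definition avoid_weight (a : 'I_n) : R :=
  \sum_(c | c != a) \sum_(d | (d != c) && (d != a)) mu c d.

Definition sigma_defect : R := \sum_a fdeg mu a * (fsize mu - fdeg mu a).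

Lemma sum_fdeg : \sum_a fdeg mu a = 2 * fsize mu.
Proof.
have split_deg a : fdeg mu a =
    \sum_(b : 'I_n | (a < b)%N) mu a b + \sum_(b : 'I_n | (b < a)%N) mu a b.
  rewrite /fdeg (bigID (fun b : 'I_n => (a < b)%N)) /=.
  by congr (_ + _); apply: eq_bigl => b /=; rewrite -(inj_eq val_inj) /=; case: ltngtP.
have lower : \sum_(a : 'I_n) \sum_(b : 'I_n | (b < a)%N) mu a b = fsize mu.
  rewrite /fsize; under eq_bigr do rewrite big_mkcond /=.
  rewrite exchange_big; apply: eq_bigr => b _; rewrite [RHS]big_mkcond.
  by apply: eq_bigr => a _; rewrite mu_sym.
by rewrite (eq_bigr _ (fun a _ => split_deg a)) big_split /= lower mulr2n mulrDl mul1r.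
Qed.

Lemma sum_fdeg_del a : \sum_c fdeg mu c = 2 * fdeg mu a + avoid_weight a.
Proof.
have deg_c c : c != a ->
    fdeg mu c = mu c a + \sum_(d | (d != c) && (d != a)) mu c d.
  by move=> ca; rewrite /fdeg (bigD1 a) // eq_sym.
rewrite (bigD1 a) //= (eq_bigr _ deg_c) big_split /=.
have -> : \sum_(c | c != a) mu c a = fdeg mu a by apply: eq_bigr => c _.
by rewrite /avoid_weight; ring.
Qed.

Lemma fsize_subfdeg a : 2 * (fsize mu - fdeg mu a) = avoid_weight a.
Proof. by have := sum_fdeg_del a; rewrite sum_fdeg; lra. Qed.

Lemma fsigmaE : (0 < n)%N ->
  fsigma mu = 2 * fsize mu ^+ 2 / n%:R * (1 - 2 / n%:R) - sigma_defect / n%:R.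
Proof.
move=> n_gt0; have n0 : n%:R != 0 :> R by rewrite pnatr_eq0 -lt0n.
have defectE : sigma_defect = 2 * fsize mu ^+ 2 - \sum_a fdeg mu a ^+ 2.
  rewrite /sigma_defect (eq_bigr (fun a => fdeg mu a * fsize mu - fdeg mu a ^+ 2));
    last by move=> a _; ring.
  by rewrite sumrB -mulr_suml sum_fdeg expr2 mulrA.
rewrite /fsigma defectE.
rewrite (eq_bigr (fun v => fdeg mu v ^+ 2 - 2 * flambda mu * fdeg mu v + flambda mu ^+ 2));
  last by move=> v _; ring.
rewrite big_split sumrB /= -mulr_sumr sum_fdeg sumr_const card_ord -mulr_natr.
by rewrite /flambda; field.
Qed.

Hypothesis mu_ge0 : forall u v, 0 <= mu u v.

Lemma fdeg_ge0 a : 0 <= fdeg mu a.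
Proof. exact: sumr_ge0. Qed.

Lemma fdeg_le_fsize a : fdeg mu a <= fsize mu.
Proof.
have : 0 <= avoid_weight a by do 2 (apply: sumr_ge0 => ? _).
by rewrite -fsize_subfdeg; lra.
Qed.

Lemma fdeg_eq0 a : fdeg mu a = 0 -> forall b, b != a -> mu a b = 0.
Proof. exact: psumr_eq0P. Qed.

Lemma avoid_weight_eq0 a : avoid_weight a = 0 ->
  forall c d, c != d -> c != a -> d != a -> mu c d = 0.
Proof.
move=> W0 c d cd ca da.
have inner0 := psumr_eq0P (fun c _ => sumr_ge0 _ (fun d _ => mu_ge0 c d)) W0 ca.
by apply: (psumr_eq0P (fun i _ => mu_ge0 c i) inner0); rewrite eq_sym cd.
Qed.

Lemma defect_term_ge0 a : 0 <= fdeg mu a * (fsize mu - fdeg mu a).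
Proof. by rewrite mulr_ge0 ?fdeg_ge0 ?subr_ge0 ?fdeg_le_fsize. Qed.

Lemma sigma_defect_ge0 : 0 <= sigma_defect.
Proof. exact: sumr_ge0 (fun a _ => defect_term_ge0 a). Qed.

Lemma sigma_defect0_fdeg : sigma_defect = 0 ->
  forall a, fdeg mu a = 0 \/ fdeg mu a = fsize mu.
Proof.
move=> D0 a.
have /eqP : fdeg mu a * (fsize mu - fdeg mu a) = 0 :=
  psumr_eq0P (fun b _ => defect_term_ge0 b) D0 isT.
by rewrite mulf_eq0 subr_eq0 => /orP[]/eqP ->; [left | right].
Qed.

Lemma sigma_defect0_single_edge : (2 <= n)%N -> sigma_defect = 0 ->
  exists u v : 'I_n, [/\ u != v, mu u v = fsize mu &
    forall x y : 'I_n, x != y -> ~ ((x == u) && (y == v) || (x == v) && (y == u)) ->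
      mu x y = 0].
Proof.
move=> n2 D0.
have [[u v] /andP[/= vu muv] | no_edge] :=
  pickP (fun p : 'I_n * 'I_n => (p.2 != p.1) && (mu p.1 p.2 != 0)).
- have avoid0 a b : b != a -> mu a b != 0 -> avoid_weight a = 0.
    move=> ba ab; rewrite -fsize_subfdeg.
    case: (sigma_defect0_fdeg D0 a) => [/fdeg_eq0/(_ b ba)/eqP | ->].
      by rewrite (negbTE ab).
    by rewrite subrr mulr0.
  have uv : u != v by rewrite eq_sym.
  have mvu : mu v u != 0 by rewrite mu_sym.
  have Wu := avoid_weight_eq0 (avoid0 u v vu muv).
  have Wv := avoid_weight_eq0 (avoid0 v u uv mvu).
  exists u, v; split=> //.
    have : avoid_weight u = 0 by apply: avoid0 muv.
    rewrite -fsize_subfdeg /fdeg (bigD1 v) //= big1 ?addr0; first lra.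
    by move=> b /andP[bu bv]; apply: Wv; rewrite // eq_sym.
  move=> x y xy not_uv.
  have [xyu|] := boolP ((x == u) || (y == u)); last first.
    by rewrite negb_or => /andP[]; apply: Wu.
  have [xyv|] := boolP ((x == v) || (y == v)); last first.
    by rewrite negb_or => /andP[]; apply: Wv.
  by case: not_uv; apply: endpoints_cover_edge.
- have mu0 x y : y != x -> mu x y = 0.
    by move=> yx; move: (no_edge (x, y)); rewrite /= yx => /negbFE/eqP.
  have e0 : fsize mu = 0.
    have : \sum_a fdeg mu a = 0 by apply: big1 => a _; apply: big1 => b; apply: mu0.
    by rewrite sum_fdeg; lra.
  exists (Ordinal (ltnW n2)), (Ordinal n2); split=> //; first by rewrite mu0.
  by move=> x y xy _; rewrite mu0 // eq_sym.
Qed.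

Lemma single_edge_sigma_defect0 (u v : 'I_n) :
  (forall x y : 'I_n, x != y -> ~ ((x == u) && (y == v) || (x == v) && (y == u)) ->
     mu x y = 0) ->
  sigma_defect = 0.
Proof.
move=> only_uv; apply: big1 => a _.
have [aUV | a_out] := boolP ((a == u) || (a == v)).
  have : avoid_weight a = 0.
    apply: big1 => c ca; apply: big1 => d /andP[dc da]; apply: only_uv.
      by rewrite eq_sym.
    by case/orP: aUV => /eqP E; rewrite -E (negbTE ca) (negbTE da) /= ?andbF.
  rewrite -fsize_subfdeg => W0; have -> : fsize mu = fdeg mu a by lra.
  by rewrite subrr mulr0.
rewrite (_ : fdeg mu a = 0) ?mul0r //; apply: big1 => b ba.
apply: only_uv; first by rewrite eq_sym.
by move: a_out; rewrite negb_or => /andP[/negbTE-> /negbTE->].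
Qed.

End FuzzyDegrees.

Theorem theorem3p2 (R : realFieldType) (n : nat) (nu : 'I_n -> R)
  (mu : 'I_n -> 'I_n -> R) :
  (2 <= n)%N -> is_fuzzy_graph nu mu ->
  fsigma mu <= 2 * fsize mu ^+ 2 / n%:R * (1 - 2 / n%:R) /\
  (fsigma mu = 2 * fsize mu ^+ 2 / n%:R * (1 - 2 / n%:R) <->
   exists u v : 'I_n, [/\ u != v, mu u v = fsize mu &
     forall x y : 'I_n, x != y -> ~ ((x == u) && (y == v) || (x == v) && (y == u)) ->
       mu x y = 0]).
Proof.
move=> n2 [_ mu01 mu_sym _].
have mu_ge0 u v : 0 <= mu u v by case/andP: (mu01 u v).
have n_gt0 : (0 < n)%N := ltnW n2.
have n_pos : 0 < n%:R :> R by rewrite ltr0n.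
rewrite (fsigmaE mu_sym n_gt0).
set bound := 2 * fsize mu ^+ 2 / n%:R * (1 - 2 / n%:R); split.
  by rewrite gerBl divr_ge0 ?ler0n ?(sigma_defect_ge0 mu_sym mu_ge0).
split=> [eq_bound | [u [v [_ _ only_uv]]]].
  apply: sigma_defect0_single_edge => //.
  have /eqP : - (sigma_defect mu / n%:R) = 0.
    by apply: (addrI bound); rewrite addr0.
  by rewrite oppr_eq0 mulf_eq0 invr_eq0 (gt_eqF n_pos) orbF => /eqP.
by rewrite (single_edge_sigma_defect0 mu_sym only_uv) mul0r subr0.
Qed.
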